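(* Consider a cross-modal generalization problem with modalities $m\in\{1,\dots,M\}$ and tasks $n\in\{1,\dots,N\}$, generalization objective $\mathcal{L}[f_w]=\mathbb{E}_{(m,n)\sim p(m,n),\,(x,y)\sim p_{m,n}(x,y)}\log\left[\frac{f_w(x,y,m,n)}{p(x,y\mid m,n)}\right]$, and a low-resource subset $\mathcal{M}$ of modality–task pairs on which only estimates $q(x,y\mid m,n)\neq p(x,y\mid m,n)$ are available, and assume the minimum visibility assumption holds. Suppose all modalities are pairwise strongly aligned. Then one can define a surrogate loss functional $\tilde{\mathcal{L}}[f_w]$, computable from the known distributions, such that $\mathcal{L}\left[\arg\max_w \tilde{\mathcal{L}}[f_w]\right]=0$, i.e. maximizing the surrogate yields perfect generalization (including on the low-resource pairs in $\mathcal{M}$).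
   Context: There are $M$ heterogeneous input spaces (modalities) $\mathcal{X}_m$ and $N$ label spaces (tasks) $\mathcal{Y}_n$. A meta-distribution over modalities, tasks, inputs and labels is given; $(m,n)$ is drawn from a prior $p(m,n)$ and, within the classification problem $\mathcal{T}(m,n)=(\mathcal{X}_m,\mathcal{Y}_n,p_{m,n})$, data are drawn from the true labeling distribution $p_{m,n}(x,y):=p(x,y\mid m,n)$. A model is a single function $f_w(x,y,m,n)$ with parameters $w$; the cross-modal generalization problem is to maximize $\mathcal{L}[f_w]$ above, whose maximum value $0$ is attained when $f_w(x,y,m,n)=p(x,y\mid m,n)$ (''perfect generalization''). A distribution is called known if it can be estimated exactly/accurately. The problem is (partially) low resource on a subset $\mathcal{M}$ of modality–task pairs if for $(m,n)\in\mathcal{M}$, $p(x,y\mid m,n)$ is not known and only an estimate $q(x,y\mid m,n)\ne p(x,y\mid m,n)$ is available. Minimum visibility assumption: for every task $n$ there is at least one modality $m$ such that $p(x,y\mid m,n)$ is known; for every modality $m$ there is at least one task $n$ such that $p(x,y\mid m,n)$ is known; and all single-variable marginals $p(x)$, $p(y)$ are known. Strong alignment: for modalities $m_i\ne m_j$ with joint $p(x_i,x_j)$ known ($x_i\in\mathcal{X}_{m_i}$, $x_j\in\mathcal{X}_{m_j}$), there is strong alignment between $m_i$ and $m_j$ if both $p(x_i\mid x_j)$ and $p(x_j\mid x_i)$ are delta distributions (a one-to-one mapping between $x_i$ and $x_j$); otherwise only weak alignment. *)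

From HB Require Import structures.
From mathcomp Require Import all_boot all_order all_algebra.
From mathcomp Require Import reals constructive_ereal exp.

Set Implicit Arguments.
Unset Strict Implicit.
Unset Printing Implicit Defensive.

Import Order.TTheory GRing.Theory Num.Theory.
Local Open Scope ring_scope.

Section CrossModal.
Variable R : realType.
Variables (M N : nat) (X : 'I_M -> finType) (Y : 'I_N -> finType).

(* The meta-distribution is a distribution P over worlds; every distribution
   of the paper (p(x,y|m,n), p(x), p(y), p(x_i,x_j)) is a marginal of P. *)
Definition world := ({dffun forall m : 'I_M, X m} * {dffun forall n : 'I_N, Y n})%type.

Definition cond_table := forall (m : 'I_M) (n : 'I_N), X m -> Y n -> R.

Definition is_distr (T : finType) (P : T -> R) :=
  (forall t, 0 <= P t) /\ \sum_(t : T) P t = 1.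

Definition labeling (P : world -> R) : cond_table :=
  fun m n x y => \sum_(w : world | (w.1 m == x) && (w.2 n == y)) P w.
Definition marg_x (P : world -> R) (m : 'I_M) (x : X m) : R :=
  \sum_(w : world | w.1 m == x) P w.
Definition marg_y (P : world -> R) (n : 'I_N) (y : Y n) : R :=
  \sum_(w : world | w.2 n == y) P w.
Definition joint_xx (P : world -> R) (i j : 'I_M) (xi : X i) (xj : X j) : R :=
  \sum_(w : world | (w.1 i == xi) && (w.1 j == xj)) P w.

Definition valid_model (f : cond_table) :=
  forall m n, (forall x y, 0 <= f m n x y) /\ \sum_(x : X m) \sum_(y : Y n) f m n x y = 1.

Definition gen_objective (prior : 'I_M -> 'I_N -> R) (p f : cond_table) : \bar R :=
  (\sum_(m < M) \sum_(n < N) \sum_(x : X m) \sum_(y : Y n)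
     (if (0 < prior m n * p m n x y)%R then
        (if (0 < f m n x y)%R then
           ((prior m n * p m n x y) * ln (f m n x y / p m n x y))%R%:E
         else -oo)
      else 0))%E.

(* Everything that is "known": which pairs are low resource, the labeling
   distributions on the non-low-resource pairs (and the estimates q on the
   low-resource ones), the single-variable marginals and the pairwise joints
   of modalities. *)
Record observation := Obs {
  obs_lowres : 'I_M -> 'I_N -> bool;
  obs_table : cond_table;
  obs_marg_x : forall m : 'I_M, X m -> R;
  obs_marg_y : forall n : 'I_N, Y n -> R;
  obs_joint_xx : forall i j : 'I_M, X i -> X j -> R }.

Definition observe (lowres : 'I_M -> 'I_N -> bool) (P : world -> R) (q : cond_table)
  : observation :=
  Obs lowres (fun m n => if lowres m n then q m n else @labeling P m n)
      (@marg_x P) (@marg_y P) (@joint_xx P).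

Definition low_resource (lowres : 'I_M -> 'I_N -> bool) (P : world -> R) (q : cond_table) :=
  forall m n, lowres m n -> q m n <> @labeling P m n.

(* minimum visibility (the marginals are known by construction of observe) *)
Definition min_visibility (lowres : 'I_M -> 'I_N -> bool) :=
  (forall n, exists m, ~~ lowres m n) /\ (forall m, exists n, ~~ lowres m n).

Definition delta_cond (A B : finType) (J : A -> B -> R) (ma : A -> R) :=
  forall a, 0 < ma a -> exists b0, forall b, J a b / ma a = (b == b0)%:R.

Definition strongly_aligned (P : world -> R) (i j : 'I_M) :=
  delta_cond (@joint_xx P i j) (@marg_x P i) /\
  delta_cond (fun xj xi => @joint_xx P i j xi xj) (@marg_x P j).

End CrossModal.

From HB Require Import structures.
From mathcomp Require Import all_boot all_order all_algebra.
From mathcomp Require Import reals constructive_ereal exp.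

(* Under strong alignment of m and m', the conditional p(x'|x) is a one-to-one
   deterministic map on the support, so p(x, y | m, n) = \sum_x' p(x'|x) p(x', y | m', n)
   for every modality m' whose pair (m', n) is known; minimum visibility provides
   such an m' for every task n.  Hence every labeling distribution, including the
   low-resource ones, is computable from known quantities.  The surrogate is the
   generalization objective with this reconstructed table in place of p; by Gibbs'
   inequality (ln t <= t - 1, strictly for t <> 1) it is at most 0, with equality
   exactly at the reconstructed table, which is the true labeling distribution. *)

Set Implicit Arguments.
Unset Strict Implicit.
Unset Printing Implicit Defensive.

Import Order.TTheory GRing.Theory Num.Theory.
Local Open Scope ring_scope.

Section LogRatio.
Variable R : realType.

Lemma ln_lt_subr1 (t : R) : 0 < t -> t != 1 -> ln t < t - 1.
Proof.
move=> t_gt0 t_neq1; rewrite ltrBrDl.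
have ln_neq0 : ln t != 0.
  by apply: contra t_neq1 => /eqP ln0; rewrite -[t]lnK ?posrE // ln0 expR0.
by have := expR_gt1Dx ln_neq0; rewrite lnK ?posrE // addrC.
Qed.

Lemma mul_ln_div_lt (a b : R) : 0 < a -> 0 < b -> b != a -> a * ln (b / a) < b - a.
Proof.
move=> a_gt0 b_gt0 ba; have a_neq0 : a != 0 by rewrite gt_eqF.
have -> : b - a = a * (b / a - 1) by rewrite mulrBr mulr1 mulrCA divff ?mulr1.
rewrite ltr_pM2l // ln_lt_subr1 ?divr_gt0 //.
by apply: contra ba => /eqP/divr1_eq ->.
Qed.

Definition log_ratio_term (c a b : R) : \bar R :=
  if 0 < c * a then if 0 < b then (c * a * ln (b / a))%:E else -oo%E else 0%E.

Lemma log_ratio_term_lt (c a b : R) : 0 < c -> 0 <= a -> 0 <= b -> b != a ->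
  (log_ratio_term c a b < (c * (b - a))%:E)%E.
Proof.
move=> c_gt0 a_ge0 b_ge0 ba; rewrite /log_ratio_term pmulr_rgt0 //.
have [a_gt0|] := ltP 0 a; last first.
  move=> a_le0; have a0 : a = 0 by apply/eqP; rewrite eq_le a_le0.
  rewrite a0 subr0 lte_fin pmulr_rgt0 // lt_def b_ge0 andbT.
  by rewrite -a0.
have [b_gt0|_] := ltP 0 b; last exact: ltNyr.
by rewrite lte_fin -mulrA ltr_pM2l // mul_ln_div_lt.
Qed.

Lemma log_ratio_term_id (c a : R) : 0 <= a -> log_ratio_term c a a = 0%E.
Proof.
move=> a_ge0; rewrite /log_ratio_term; case: ifPn => // ca_gt0.
have a_gt0 : 0 < a.
  by rewrite lt_def a_ge0 andbT; apply: contraTneq ca_gt0 => ->; rewrite mulr0 ltxx.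
by rewrite a_gt0 divff ?gt_eqF // ln1 mulr0.
Qed.

Lemma log_ratio_term_le (c a b : R) : 0 <= c -> 0 <= a -> 0 <= b ->
  (log_ratio_term c a b <= (c * (b - a))%:E)%E.
Proof.
move=> c_ge0 a_ge0 b_ge0; have [->|ba] := eqVneq b a.
  by rewrite log_ratio_term_id // subrr mulr0.
have [c_gt0|] := ltP 0 c; first exact/ltW/log_ratio_term_lt.
move=> c_le0; have -> : c = 0 by apply/eqP; rewrite eq_le c_le0.
by rewrite /log_ratio_term !mul0r ltxx.
Qed.

Lemma lte_sum_EFin (I : finType) (e : I -> \bar R) (r : I -> R) (i0 : I) :
  (forall i, e i <= (r i)%:E)%E -> (e i0 < (r i0)%:E)%E ->
  (\sum_i e i < (\sum_i r i)%:E)%E.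
Proof.
move=> e_le e_lt; rewrite -sumEFin (bigD1 i0) //= [X in (_ < X)%E](bigD1 i0) //=.
have : (\sum_(i | i != i0) e i <= \sum_(i | i != i0) (r i)%:E)%E by exact: lee_sum.
rewrite sumEFin; case: (\sum_(i | i != i0) e i) => [s||] // s_le.
- exact: lte_leD.
- by rewrite addeNy ltNyr.
Qed.

Lemma sume_lt0 (I : finType) (e : I -> \bar R) (i0 : I) :
  (forall i, e i <= 0)%E -> (e i0 < 0)%E -> (\sum_i e i < 0)%E.
Proof.
move=> e_le0 e_lt0.
suff : (\sum_i e i < (\sum_(i : I) 0%R)%:E)%E by rewrite big1_eq.
exact: (lte_sum_EFin (i0 := i0)).
Qed.

Definition is_distr2 (A B : finType) (p : A -> B -> R) :=
  (forall a b, 0 <= p a b) /\ \sum_a \sum_b p a b = 1.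

Definition log_ratio_sum (A B : finType) (c : R) (p f : A -> B -> R) : \bar R :=
  \sum_a \sum_b log_ratio_term c (p a b) (f a b).

Section LogRatioSum.
Variables (A B : finType) (c : R) (p f : A -> B -> R).

Lemma sum_weighted_diff : is_distr2 p -> is_distr2 f ->
  \sum_a \sum_b c * (f a b - p a b) = 0.
Proof.
move=> [_ p1] [_ f1].
under eq_bigr do rewrite -mulr_sumr sumrB.
by rewrite -mulr_sumr sumrB f1 p1 subrr mulr0.
Qed.

Lemma log_ratio_sum_le0 : 0 <= c -> is_distr2 p -> is_distr2 f ->
  (log_ratio_sum c p f <= 0)%E.
Proof.
move=> c_ge0 pd fd.
suff : (log_ratio_sum c p f <= (\sum_a \sum_b c * (f a b - p a b))%:E)%E.
  by rewrite sum_weighted_diff.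
rewrite -sumEFin; apply: lee_sum => a _; rewrite -sumEFin; apply: lee_sum => b _.
by apply: log_ratio_term_le => //; [case: pd | case: fd].
Qed.

Lemma log_ratio_sum_lt0 a b : 0 < c -> is_distr2 p -> is_distr2 f ->
  f a b != p a b -> (log_ratio_sum c p f < 0)%E.
Proof.
move=> c_gt0 pd fd fp; have [p0 _] := pd; have [f0 _] := fd.
suff : (log_ratio_sum c p f < (\sum_a \sum_b c * (f a b - p a b))%:E)%E.
  by rewrite sum_weighted_diff.
rewrite /log_ratio_sum; apply: (lte_sum_EFin (i0 := a)) => [a'|].
  rewrite -sumEFin; apply: lee_sum => b' _.
  exact/log_ratio_term_le/f0/p0/ltW.
apply: (lte_sum_EFin (i0 := b)) => [b'|]; first exact/log_ratio_term_le/f0/p0/ltW.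
exact: log_ratio_term_lt.
Qed.

End LogRatioSum.

End LogRatio.

Section GenObjective.
Variables (R : realType) (M N : nat) (X : 'I_M -> finType) (Y : 'I_N -> finType).
Variables (prior : 'I_M -> 'I_N -> R) (p f : cond_table R X Y).

Lemma gen_objectiveE : gen_objective prior p f =
  (\sum_m \sum_n log_ratio_sum (prior m n) (@p m n) (@f m n))%E.
Proof. by []. Qed.

Lemma gen_objective_le0 : (forall m n, 0 <= prior m n) ->
  valid_model p -> valid_model f -> (gen_objective prior p f <= 0)%E.
Proof.
move=> prior_ge0 pv fv; rewrite gen_objectiveE.
apply: sume_le0 => m _; apply: sume_le0 => n _.
exact: log_ratio_sum_le0 (pv m n) (fv m n).
Qed.

Lemma gen_objective_eq0 : valid_model p ->
  (forall m n (x : X m) (y : Y n), f x y = p x y) -> gen_objective prior p f = 0%E.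
Proof.
move=> pv fp; rewrite gen_objectiveE big1 // => m _; rewrite big1 // => n _.
rewrite /log_ratio_sum big1 // => x _; rewrite big1 // => y _.
by rewrite fp log_ratio_term_id //; case: (pv m n).
Qed.

Lemma gen_objective_eq0P : (forall m n, 0 < prior m n) ->
  valid_model p -> valid_model f -> gen_objective prior p f = 0%E ->
  forall m n (x : X m) (y : Y n), f x y = p x y.
Proof.
move=> prior_gt0 pv fv obj0 m n x y; apply/eqP/negPn/negP => fp.
suff : (gen_objective prior p f < 0)%E by rewrite obj0 ltxx.
rewrite gen_objectiveE; apply: (sume_lt0 (i0 := m)) => [m'|].
  apply: sume_le0 => n' _.
  exact: log_ratio_sum_le0 (ltW (prior_gt0 m' n')) (pv m' n') (fv m' n').
apply: (sume_lt0 (i0 := n)) => [n'|].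
  exact: log_ratio_sum_le0 (ltW (prior_gt0 m n')) (pv m n') (fv m n').
exact: log_ratio_sum_lt0 (prior_gt0 m n) (pv m n) (fv m n) fp.
Qed.

End GenObjective.

Section NonnegSums.
Variables (R : numDomainType) (I : finType) (A B : pred I) (F : I -> R).
Hypothesis F_ge0 : forall i, 0 <= F i.

Lemma ler_sum_andb : \sum_(i | A i && B i) F i <= \sum_(i | A i) F i.
Proof. by rewrite [leRHS](bigID B) /= lerDl sumr_ge0. Qed.

Lemma sum_andb_eq_support : \sum_(i | A i && B i) F i = \sum_(i | A i) F i ->
  forall i, A i -> F i != 0 -> B i.
Proof.
rewrite [RHS](bigID B) /= => /eqP; rewrite -[X in X == _]addr0 => /eqP/addrI/esym rest0 i Ai.
by apply: contraR => nBi; apply/eqP/(psumr_eq0P _ rest0); rewrite ?Ai.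
Qed.

End NonnegSums.

Section DeltaConditional.
Variables (R : realType) (A B : finType) (J : A -> B -> R) (ma : A -> R).
Hypothesis J_delta : delta_cond J ma.

Lemma delta_cond_eq a b : 0 < ma a -> J a b != 0 -> J a b = ma a.
Proof.
move=> ma_gt0 Jab; have [b0 Jb0] := J_delta ma_gt0.
have := Jb0 b; case: eqP => _; first exact: divr1_eq.
by move/eqP; rewrite mulf_eq0 invr_eq0 (negPf Jab) gt_eqF.
Qed.

Lemma delta_cond_sum a : 0 < ma a ->
  exists2 b0, J a b0 = ma a & forall G : B -> R, \sum_b J a b / ma a * G b = G b0.
Proof.
move=> ma_gt0; have [b0 Jb0] := J_delta ma_gt0; exists b0.
  by apply: divr1_eq; rewrite Jb0 eqxx.
move=> G; rewrite (bigD1 b0) //= Jb0 eqxx mul1r big1 ?addr0 // => b nb.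
by rewrite Jb0 (negPf nb) mul0r.
Qed.

End DeltaConditional.

Section StrongAlignment.
Variables (R : realType) (M N : nat) (X : 'I_M -> finType) (Y : 'I_N -> finType).
Variable P : world X Y -> R.
Hypothesis P_ge0 : forall w, 0 <= P w.

Lemma labeling_le_marg_x m n (x : X m) (y : Y n) : labeling P x y <= marg_x P x.
Proof. exact: ler_sum_andb. Qed.

Lemma joint_xx_le_marg_x i j (xi : X i) (xj : X j) : joint_xx P xi xj <= marg_x P xi.
Proof. exact: ler_sum_andb. Qed.

Lemma joint_xxC i j (xi : X i) (xj : X j) : joint_xx P xi xj = joint_xx P xj xi.
Proof. by apply: eq_bigl => w; rewrite andbC. Qed.

Lemma joint_xx_eq_marg_x i j (xi : X i) (xj : X j) : joint_xx P xi xj = marg_x P xi ->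
  forall w, P w != 0 -> w.1 i == xi -> w.1 j == xj.
Proof. by move=> eq_marg w Pw wi; apply: (sum_andb_eq_support P_ge0 eq_marg). Qed.

Lemma eq_labeling_support m m' n (x : X m) (x' : X m') (y : Y n) :
  (forall w, P w != 0 -> (w.1 m == x) = (w.1 m' == x')) ->
  labeling P x y = labeling P x' y.
Proof.
move=> same_support; rewrite /labeling [LHS]big_mkcond [RHS]big_mkcond.
apply: eq_bigr => w _.
by have [->|/same_support->] := eqVneq (P w) 0; rewrite ?if_same.
Qed.

Lemma aligned_transfer m m' n (x : X m) (y : Y n) : strongly_aligned P m m' ->
  \sum_(x' : X m') joint_xx P x x' / marg_x P x * labeling P x' y = labeling P x y.
Proof.
move=> [align_mm' align_m'm]; have [mx0|mx_neq0] := eqVneq (marg_x P x) 0.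
  rewrite big1 => [|x' _]; last by rewrite mx0 invr0 mulr0 mul0r.
  apply/esym/eqP; rewrite eq_le sumr_ge0 // andbT -mx0.
  exact: labeling_le_marg_x.
have mx_gt0 : 0 < marg_x P x by rewrite lt_def mx_neq0 sumr_ge0.
have [x0 Jx0 ->] := delta_cond_sum align_mm' mx_gt0.
have mx0_gt0 : 0 < marg_x P x0.
  by rewrite (lt_le_trans mx_gt0) // -Jx0 joint_xxC joint_xx_le_marg_x.
have Jx0' : joint_xx P x0 x = marg_x P x0.
  rewrite joint_xxC; apply: (delta_cond_eq align_m'm mx0_gt0).
  by rewrite /= Jx0 gt_eqF.
apply/esym/eq_labeling_support => w Pw; apply/idP/idP.
- exact: joint_xx_eq_marg_x Jx0 w Pw.
- exact: joint_xx_eq_marg_x Jx0' w Pw.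
Qed.

End StrongAlignment.

Section Reconstruction.
Variables (R : realType) (M N : nat) (X : 'I_M -> finType) (Y : 'I_N -> finType).

Lemma labeling_valid (P : world X Y -> R) : is_distr P -> valid_model (labeling P).
Proof.
move=> [P_ge0 P_sum1] m n; split=> [x y|]; first exact: sumr_ge0.
rewrite -P_sum1 (partition_big (fun w : world X Y => w.1 m) predT) //=.
by apply: eq_bigr => x _; rewrite (partition_big (fun w : world X Y => w.2 n) predT).
Qed.

Lemma eq_valid_model (f g : cond_table R X Y) :
  (forall m n x y, f m n x y = g m n x y) -> valid_model f -> valid_model g.
Proof.
move=> fg fv m n; have [f_ge0 f_sum1] := fv m n; split=> [x y|]; first by rewrite -fg.
by rewrite -f_sum1; apply: eq_bigr => x _; apply: eq_bigr => y _; rewrite fg.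
Qed.

(* p(x, y | m, n) = \sum_x' p(x' | x) p(x', y | m', n) *)
Definition transferred_table (o : observation R X Y) m' m n (x : X m) (y : Y n) : R :=
  \sum_(x' : X m') obs_joint_xx o x x' / obs_marg_x o x * obs_table o x' y.

(* The [None] branch is unreachable under minimum visibility. *)
Definition reconstructed_table (o : observation R X Y) : cond_table R X Y :=
  fun m n => if obs_lowres o m n then
    if [pick m' | ~~ obs_lowres o m' n] is Some m' then @transferred_table o m' m n
    else @obs_table _ _ _ _ _ o m n
  else @obs_table _ _ _ _ _ o m n.

Lemma reconstructed_tableE (lowres : 'I_M -> 'I_N -> bool) (P : world X Y -> R)
    (q : cond_table R X Y) :
  (forall w, 0 <= P w) -> (forall n, exists m, ~~ lowres m n) ->
  (forall i j, i != j -> strongly_aligned P i j) ->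
  forall m n (x : X m) (y : Y n),
    reconstructed_table (observe lowres P q) x y = labeling P x y.
Proof.
move=> P_ge0 visible aligned m n x y; rewrite /reconstructed_table /=.
case lowres_mn : (lowres m n) => //.
case: pickP => [m' /= vis_m'|none]; last first.
  by have [m' vis_m'] := visible n; move: (none m'); rewrite /= vis_m'.
rewrite /transferred_table /= (negPf vis_m') aligned_transfer //.
by apply: aligned; apply: contraNneq vis_m' => <-; rewrite lowres_mn.
Qed.

(* The prior is not observed; any positive weighting of the pairs will do. *)
Definition surrogate_objective (o : observation R X Y) : cond_table R X Y -> \bar R :=
  gen_objective (fun _ _ => 1) (reconstructed_table o).

End Reconstruction.

Theorem proposition1 (R : realType) :
  exists S : forall (M N : nat) (X : 'I_M -> finType) (Y : 'I_N -> finType),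
               observation R X Y -> cond_table R X Y -> \bar R,
  forall (M N : nat) (X : 'I_M -> finType) (Y : 'I_N -> finType)
         (prior : 'I_M -> 'I_N -> R) (P : world X Y -> R)
         (lowres : 'I_M -> 'I_N -> bool) (q : cond_table R X Y),
    is_distr (fun mn : 'I_M * 'I_N => prior mn.1 mn.2) ->
    is_distr P ->
    low_resource lowres P q ->
    min_visibility lowres ->
    (forall i j : 'I_M, i != j -> strongly_aligned P i j) ->
    let Lt := S M N X Y (observe lowres P q) in
    (exists f, valid_model f /\ forall g, valid_model g -> (Lt g <= Lt f)%E) /\
    (forall f, valid_model f -> (forall g, valid_model g -> (Lt g <= Lt f)%E) ->
       gen_objective prior (labeling P) f = 0%E).
Proof.
(* The estimates q are never consulted. *)
exists (@surrogate_objective R) => M N X Y prior P lowres q _ P_distr _ [visible _] aligned Lt.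
have recE := reconstructed_tableE q (proj1 P_distr) visible aligned.
have p_valid := labeling_valid P_distr.
have rec_valid := eq_valid_model (fun m n x y => esym (recE m n x y)) p_valid.
have Lt_le0 g : valid_model g -> (Lt g <= 0)%E.
  exact: gen_objective_le0 (fun _ _ => ler01) rec_valid.
have Lt_p : Lt (labeling P) = 0%E.
  by apply: gen_objective_eq0 => // m n x y; rewrite recE.
split=> [|f f_valid f_max].
  by exists (labeling P); split=> // g /Lt_le0; rewrite Lt_p.
have Lt_f : Lt f = 0%E by apply/eqP; rewrite eq_le Lt_le0 //= -Lt_p f_max.
have f_rec := gen_objective_eq0P (fun _ _ => ltr01) rec_valid f_valid Lt_f.
by apply: gen_objective_eq0 => // m n x y; rewrite -recE f_rec.
Qed.
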